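(* Let $H$ be a nonempty ASC-hypergraph and $M\subseteq H$. Then $M$ is a construct of $H$ if and only if every $M$-antichain misses $H$ and $\bigcup H\in M$.
   Context: A hypergraph is a finite set $H$ of nonempty subsets of some finite set; its carrier is $\bigcup H$. For a family $F$ and set $Y$, $F_Y=\{X\in F\mid X\subseteq Y\}$. A hypergraph partition of $H$ is a partition $\{H_1,\dots,H_n\}$ ($n\ge0$) of the set $H$ with $\{\bigcup H_1,\dots,\bigcup H_n\}$ a partition of $\bigcup H$; $H$ is connected if it has exactly one hypergraph partition; the finest hypergraph partition is the unique one whose blocks are connected. $H$ is atomic if $\{x\}\in H$ for all $x\in\bigcup H$; saturated if $X_1,X_2\in H$ with $X_1\cap X_2\neq\emptyset$ imply $X_1\cup X_2\in H$. An ASC-hypergraph is one that is atomic, saturated and connected. Constructions of an atomic $H$, by induction on $|\bigcup H|$: (0) $\emptyset$ is the only construction of $\emptyset$; (1) if $|\bigcup H|\ge1$, $H$ connected, $x\in\bigcup H$, $K$ a construction of $H_{\bigcup H\setminus\{x\}}$, then $K\cup\{\bigcup H\}$ is a construction of $H$; (2) if $H$ is not connected with finest hypergraph partition $\{H_1,\dots,H_n\}$, $n\ge2$, and $K_i$ is a construction of $H_i$, then $K_1\cup\dots\cup K_n$ is a construction of $H$. A construct of a connected nonempty atomic $H$ is a subset of some construction of $H$ that contains $\bigcup H$. For $M\subseteq H$, an $M$-antichain is a subset $S\subseteq M$ with $|S|\ge2$ such that no member of $S$ is a subset of another member of $S$; it misses $H$ when $\bigcup S\notin H$. *)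

From mathcomp Require Import all_boot.
Set Implicit Arguments. Unset Strict Implicit. Unset Printing Implicit Defensive.

Section Hypergraphs.
Variable T : finType.
Implicit Types (H K M S : {set {set T}}) (X Y : {set T}) (P : {set {set {set T}}}).

Definition hypergraph H : Prop := set0 \notin H.

Definition carrier H : {set T} := \bigcup_(X in H) X.

Definition restr H Y : {set {set T}} := [set X in H | X \subset Y].

(* hypergraph partition: P is a partition of the set H, and the family of
   carriers {U H_1, ..., U H_n} (indexed by the blocks, hence injectively)
   is a partition of U H *)
Definition hpartition H P : Prop :=
  [/\ partition P H,
      {in P &, injective carrier} &
      partition [set carrier B | B in P] (carrier H)].

Definition connected H : Prop := exists! P, hpartition H P.

Definition atomic H : Prop := forall x, x \in carrier H -> [set x] \in H.

Definition saturated H : Prop :=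
  forall X1 X2, X1 \in H -> X2 \in H -> X1 :&: X2 != set0 -> X1 :|: X2 \in H.

Definition ASC H : Prop := [/\ hypergraph H, atomic H, saturated H & connected H].

Inductive construction : {set {set T}} -> {set {set T}} -> Prop :=
| constr_empty : construction set0 set0
| constr_conn H x K :
    0 < #|carrier H| -> connected H -> x \in carrier H ->
    construction (restr H (carrier H :\ x)) K ->
    construction H (carrier H |: K)
| constr_split H P (Ks : {set {set T}} -> {set {set T}}) :
    ~ connected H ->
    hpartition H P -> (forall B, B \in P -> connected B) -> 2 <= #|P| ->
    (forall B, B \in P -> construction B (Ks B)) ->
    construction H (\bigcup_(B in P) Ks B).

Definition construct H M : Prop :=
  (exists K, construction H K /\ M \subset K) /\ carrier H \in M.

Definition antichain M S : Prop :=
  [/\ S \subset M, 2 <= #|S| &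
      forall X Y, X \in S -> Y \in S -> X \subset Y -> X = Y].

Definition misses H S : Prop := carrier S \notin H.

End Hypergraphs.

(* An antichain of a construction
   [carrier H |: K] cannot contain [carrier H], which contains every other member,
   so it lies in [K], whose members avoid the removed point; an antichain of a
   split construction whose union lies in [H] lies in a single block, since the
   block carriers are disjoint.
   Completeness: by induction on the size of the carrier, using that a nonempty
   saturated hypergraph is connected iff it contains its carrier.  If it does,
   the maximal members of [M :\ carrier H] cannot cover [carrier H]: otherwise
   they would form an [M]-antichain whose union [carrier H] lies in [H].  So
   some point [x] is uncovered and we recurse on [H] restricted to
   [carrier H :\ x].  If it does not, the inclusion-maximal members of [H] are
   pairwise disjoint, at least two, and cut [H] into connected blocks with
   smaller carriers, on which we recurse. *)
From mathcomp Require Import all_boot.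
Set Implicit Arguments. Unset Strict Implicit. Unset Printing Implicit Defensive.

Section Hypergraphs.
Variable T : finType.
Implicit Types (H K M S : {set {set T}}) (X Y : {set T}) (P : {set {set {set T}}}).

Lemma sub_carrier H X : X \in H -> X \subset carrier H.
Proof. by move=> XH; apply: (bigcup_sup X). Qed.

Lemma carrier_sub H Y : (forall X, X \in H -> X \subset Y) -> carrier H \subset Y.
Proof. by move=> subY; apply/bigcupsP. Qed.

Lemma carrierS H1 H2 : H1 \subset H2 -> carrier H1 \subset carrier H2.
Proof. by move=> sH; apply: carrier_sub => X /(subsetP sH); apply: sub_carrier. Qed.

Lemma carrier_eq0 H : hypergraph H -> (carrier H == set0) = (H == set0).
Proof.
move=> h0; apply/eqP/eqP => [c0|->]; last by rewrite /carrier big_set0.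
apply/setP=> X; rewrite inE; apply/negP=> XH.
move: (sub_carrier XH); rewrite c0 subset0 => /eqP X0.
by rewrite /hypergraph -X0 XH in h0.
Qed.

Lemma restr_sub H Y : restr H Y \subset H.
Proof. by apply/subsetP=> X; rewrite inE => /andP[]. Qed.

Lemma carrier_restr_sub H Y : carrier (restr H Y) \subset Y.
Proof. by apply: carrier_sub => X; rewrite inE => /andP[]. Qed.

Lemma carrier_restr H X : X \in H -> carrier (restr H X) = X.
Proof.
move=> XH; apply/eqP; rewrite eqEsubset carrier_restr_sub.
by apply: sub_carrier; rewrite inE XH subxx.
Qed.

Lemma hypergraph_restr H Y : hypergraph H -> hypergraph (restr H Y).
Proof. by rewrite /hypergraph inE => /negbTE->. Qed.

Lemma saturated_restr H Y : saturated H -> saturated (restr H Y).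
Proof.
move=> sat X1 X2; rewrite !inE => /andP[X1H sX1] /andP[X2H sX2] meet.
by rewrite sat // subUset sX1 sX2.
Qed.

Lemma hpartition_cover H P : hpartition H P -> cover P = H.
Proof. by case=> /and3P[/eqP]. Qed.

Lemma hpartition_meet H P B1 B2 x : hpartition H P -> B1 \in P -> B2 \in P ->
  x \in carrier B1 -> x \in carrier B2 -> B1 = B2.
Proof.
case=> _ inj /and3P[_ /trivIsetP tI _] B1P B2P xB1 xB2.
have [//|neB] := eqVneq B1 B2.
have neC : carrier B1 != carrier B2 by apply: contraNneq neB => /inj->.
have := tI _ _ (imset_f _ B1P) (imset_f _ B2P) neC.
by move/disjointFr/(_ xB1); rewrite xB2.
Qed.

Lemma antichainS M1 M2 S : M1 \subset M2 -> antichain M1 S -> antichain M2 S.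
Proof. by move=> sM [sS S2 acS]; split=> //; apply: subset_trans sS sM. Qed.

Lemma antichain_setU1 Y K S :
  (forall X, X \in K -> X \subset Y) -> antichain (Y |: K) S -> antichain K S.
Proof.
move=> subY [sS S2 acS]; split=> //.
have inK X : X \in S -> X != Y -> X \in K.
  by move=> XS neXY; move: (subsetP sS X XS); rewrite in_setU1 (negbTE neXY).
have YS : Y \notin S.
  apply/negP=> YS; have : 0 < #|S :\ Y| by rewrite (cardsD1 Y) YS in S2.
  case/card_gt0P=> X; rewrite in_setD1 => /andP[neXY XS].
  suff XY : X = Y by rewrite XY eqxx in neXY.
  by apply: acS => //; apply/subY/inK.
by apply/subsetP=> X XS; apply: inK => //; apply: contraNneq YS => <-.
Qed.

Lemma construction_sub H K : construction H K ->
  forall X, X \in K -> X != set0 /\ X \subset carrier H.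
Proof.
elim=> {H K} [|H x K cH0 _ _ _ IH|H P Ks _ hp _ _ _ IH] X.
- by rewrite inE.
- rewrite in_setU1 => /predU1P[->|XK]; first by rewrite -card_gt0.
  have [X0 sX] := IH X XK; split=> //.
  by apply: subset_trans sX _; apply/carrierS/restr_sub.
- case/bigcupP=> B BP XKs; have [X0 sX] := IH B BP X XKs; split=> //.
  apply: subset_trans sX _; apply: carrierS.
  by rewrite -(hpartition_cover hp); apply: bigcup_sup BP.
Qed.

Lemma construction_misses H K : construction H K ->
  forall S, antichain K S -> misses H S.
Proof.
elim=> {H K} [|H x K _ _ _ cK IH|H P Ks _ hp _ _ cKs IH] S.
- by case; rewrite subset0 => /eqP->; rewrite cards0.
- have subK X : X \in K -> X \subset carrier H :\ x.
    move=> /(construction_sub cK)[_ sX]; exact: subset_trans sX (carrier_restr_sub _ _).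
  move=> acS; have [sSK S2 acK] : antichain K S.
    by apply: antichain_setU1 acS => X /subK sX; apply: subset_trans sX (subsetDl _ _).
  apply: contra (IH S (And3 sSK S2 acK)) => SH; rewrite inE SH.
  by apply: carrier_sub => X /(subsetP sSK)/subK.
- move=> [sS S2 acS]; apply/negP; rewrite -(hpartition_cover hp).
  case/bigcupP=> B0 B0P SB0.
  suff sSK : S \subset Ks B0.
    by have := IH B0 B0P S (And3 sSK S2 acS); rewrite /misses SB0.
  apply/subsetP=> X XS; have /bigcupP[B BP XKs] := subsetP sS X XS.
  have [/set0Pn[y yX] sXB] := construction_sub (cKs B BP) XKs.
  have sXB0 : X \subset carrier B0.
    exact: subset_trans (sub_carrier XS) (sub_carrier SB0).
  by rewrite -(hpartition_meet hp BP B0P (subsetP sXB y yX) (subsetP sXB0 y yX)).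
Qed.

Definition maxsets H := [set X | maxset (mem H) X].

Lemma maxsets_in H X : X \in maxsets H -> X \in H.
Proof. by rewrite inE => /maxsetp. Qed.

Lemma maxsets_max H X Y : X \in maxsets H -> Y \in H -> X \subset Y -> Y = X.
Proof. by rewrite inE => /maxsetsup; apply. Qed.

Lemma maxsets_cover H Y : Y \in H -> exists2 X, X \in maxsets H & Y \subset X.
Proof. by move=> YH; have [X maxX sYX] := maxset_exists YH; exists X; rewrite ?inE. Qed.

Lemma carrier_maxsets H : carrier (maxsets H) = carrier H.
Proof.
apply/eqP; rewrite eqEsubset carrierS; last by apply/subsetP=> X /maxsets_in.
apply: carrier_sub => Y /maxsets_cover[X maxX sYX].
exact: subset_trans sYX (sub_carrier maxX).
Qed.

Lemma maxsets_disjoint H X1 X2 : saturated H ->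
  X1 \in maxsets H -> X2 \in maxsets H -> X1 != X2 -> X1 :&: X2 = set0.
Proof.
move=> sat max1 max2; apply: contraNeq => meet.
have UH := sat _ _ (maxsets_in max1) (maxsets_in max2) meet.
by rewrite -(maxsets_max max1 UH (subsetUl _ _)) (maxsets_max max2 UH (subsetUr _ _)).
Qed.

Lemma maxsets_antichain M : 2 <= #|maxsets M| -> antichain M (maxsets M).
Proof.
move=> M2; split=> //; first by apply/subsetP=> X /maxsets_in.
by move=> X Y maxX /maxsets_in YM sXY; rewrite (maxsets_max maxX YM sXY).
Qed.

Lemma maxsets_card H : H != set0 -> carrier H \notin H -> 2 <= #|maxsets H|.
Proof.
case/set0Pn=> Y /maxsets_cover[X maxX _]; apply: contraR; rewrite -ltnNge ltnS => small.
have -> : carrier H = X.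
  have maxH : [set X] = maxsets H by apply/eqP; rewrite eqEcard sub1set maxX cards1.
  by rewrite -carrier_maxsets -maxH /carrier big_set1.
exact: maxsets_in maxX.
Qed.

Definition maxpart H := [set restr H X | X in maxsets H].

Lemma mem_maxpart H B : B \in maxpart H ->
  carrier B \in maxsets H /\ B = restr H (carrier B).
Proof. by case/imsetP=> X maxX ->; rewrite carrier_restr ?(maxsets_in maxX). Qed.

Lemma card_maxpart H : #|maxpart H| = #|maxsets H|.
Proof.
apply: card_in_imset => X1 X2 /maxsets_in X1H /maxsets_in X2H eqB.
by rewrite -(carrier_restr X1H) eqB carrier_restr.
Qed.

Lemma carrier_maxpart H : [set carrier B | B in maxpart H] = maxsets H.
Proof.
apply/setP=> X; apply/imsetP/idP => [[B /mem_maxpart[maxB _] ->] // | maxX].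
by exists (restr H X); rewrite ?imset_f // carrier_restr ?(maxsets_in maxX).
Qed.

Lemma partition_maxpart H : hypergraph H -> saturated H -> partition (maxpart H) H.
Proof.
move=> h0 sat; apply/and3P; split.
- apply/eqP/setP=> Y; apply/bigcupP/idP => [[B /imsetP[X _ ->]]|YH].
    exact: (subsetP (restr_sub _ _)).
  have [X maxX sYX] := maxsets_cover YH.
  by exists (restr H X); rewrite ?imset_f // inE YH.
- apply/trivIsetP=> _ _ /imsetP[X1 max1 ->] /imsetP[X2 max2 ->] neB.
  have neX : X1 != X2 by apply: contraNneq neB => ->.
  rewrite -setI_eq0; apply/eqP/setP=> Y; rewrite !inE.
  apply/negP=> /andP[/andP[YH sY1] /andP[_ sY2]].
  have : Y \subset X1 :&: X2 by rewrite subsetI sY1 sY2.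
  rewrite (maxsets_disjoint sat max1 max2 neX) subset0 => /eqP Y0.
  by rewrite /hypergraph -Y0 YH in h0.
- by apply/imsetP=> -[X maxX /setP/(_ X)]; rewrite !inE (maxsets_in maxX) subxx.
Qed.

Lemma hpartition_maxpart H : hypergraph H -> saturated H -> hpartition H (maxpart H).
Proof.
move=> h0 sat; split; first exact: partition_maxpart.
  move=> B1 B2 /mem_maxpart[_ eB1] /mem_maxpart[_ eB2] eqC.
  by rewrite eB1 eB2 eqC.
rewrite carrier_maxpart; apply/and3P; split.
- exact/eqP/carrier_maxsets.
- apply/trivIsetP=> X1 X2 max1 max2 neX.
  by rewrite -setI_eq0 (maxsets_disjoint sat max1 max2 neX).
- by apply: contra h0 => /maxsets_in.
Qed.

Lemma hpartition1 H : hypergraph H -> H != set0 -> hpartition H [set H].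
Proof.
move=> h0 Hn0; split; last 1 first.
- rewrite imset_set1; apply/and3P; split; [by rewrite cover1 | exact: trivIset1 |].
  by rewrite inE eq_sym carrier_eq0.
- by apply/and3P; split; [rewrite cover1 | exact: trivIset1 | rewrite inE eq_sym].
- by move=> B1 B2; rewrite !inE => /eqP-> /eqP->.
Qed.

Lemma carrier_in_connected H : hypergraph H -> carrier H \in H -> connected H.
Proof.
move=> h0 cH; have Hn0 : H != set0 by apply/set0Pn; exists (carrier H).
exists [set H]; split=> [|P hp]; first exact: hpartition1.
have [_ _ /and3P[_ _ P0]] := hp; have covP := hpartition_cover hp.
have /bigcupP[B0 B0P cB0] : carrier H \in cover P by rewrite covP.
have onlyB0 B : B \in P -> B = B0.
  move=> BP; have /set0Pn[y yB] : carrier B != set0.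
    by apply: contraNneq P0 => <-; apply: imset_f.
  apply: (hpartition_meet hp BP B0P yB); apply: (subsetP (sub_carrier cB0)).
  by apply: subsetP yB; apply: carrierS; rewrite -covP; apply: bigcup_sup BP.
have PB0 : P = [set B0].
  by apply/setP=> B; rewrite inE; apply/idP/eqP => [/onlyB0|->].
by rewrite -covP PB0 cover1.
Qed.

Lemma connected_carrier_in H : hypergraph H -> saturated H -> H != set0 ->
  connected H -> carrier H \in H.
Proof.
move=> h0 sat Hn0 [P [_ uniqP]].
have : H \in maxpart H.
  by rewrite -(uniqP _ (hpartition_maxpart h0 sat)) (uniqP _ (hpartition1 h0 Hn0)) set11.
by case/mem_maxpart=> /maxsets_in.
Qed.

Lemma maxpart_connected H B : hypergraph H -> B \in maxpart H -> connected B.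
Proof.
move=> h0 /mem_maxpart[/maxsets_in cBH eB].
apply: carrier_in_connected; first by rewrite eB; apply: hypergraph_restr.
by rewrite {2}eB inE cBH subxx.
Qed.

Lemma maxsets_proper H X : hypergraph H -> saturated H -> 2 <= #|maxsets H| ->
  X \in maxsets H -> X \proper carrier H.
Proof.
move=> h0 sat H2 maxX; rewrite properE (sub_carrier (maxsets_in maxX)) /=.
have : 0 < #|maxsets H :\ X| by rewrite (cardsD1 X) maxX in H2.
case/card_gt0P=> X'; rewrite in_setD1 => /andP[neX maxX'].
have X'H := maxsets_in maxX'.
apply/negP=> sHX; have sX'X := subset_trans (sub_carrier X'H) sHX.
move: (maxsets_disjoint sat maxX' maxX neX); rewrite (setIidPl sX'X) => X'0.
by rewrite /hypergraph -X'0 X'H in h0.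
Qed.

Definition constructible H M := exists K, construction H K /\ M \subset K.

Definition antichains_miss H M := forall S, antichain M S -> misses H S.

Lemma antichains_missS H1 H2 M1 M2 : H1 \subset H2 -> M1 \subset M2 ->
  antichains_miss H2 M2 -> antichains_miss H1 M1.
Proof. by move=> sH sM acM S /(antichainS sM)/acM; apply: contra; apply: subsetP. Qed.

Lemma uncovered_point H M : carrier H \in H -> carrier H != set0 -> M \subset H ->
  antichains_miss H M -> exists2 x, x \in carrier H & x \notin carrier (M :\ carrier H).
Proof.
set c := carrier H; set M' := M :\ c => cH c0 sMH acM.
suff /subsetPn[x xc xM'] : ~~ (c \subset carrier M') by exists x.
apply/negP=> sc.
have cM' : carrier (maxsets M') = c.
  rewrite carrier_maxsets; apply/eqP; rewrite eqEsubset sc andbT.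
  by apply/carrierS/(subset_trans _ sMH)/subsetDl.
have [M'2|] := leqP 2 #|maxsets M'|.
  have := acM _ (antichainS (subsetDl _ _) (maxsets_antichain M'2)).
  by rewrite /misses cM' cH.
rewrite ltnS leq_eqVlt ltnS leqn0 => /orP[/cards1P[Y eY]|].
  have : Y \in M' by apply: maxsets_in; rewrite eY set11.
  by move: cM'; rewrite eY /carrier big_set1 => ->; rewrite !inE eqxx.
rewrite cards_eq0 => /eqP e0.
by move: cM' c0; rewrite e0 /carrier big_set0 => <-; rewrite eqxx.
Qed.

Section Completeness.
Variable H : {set {set T}}.
Hypotheses (h0 : hypergraph H) (sat : saturated H).
Hypothesis IH : forall H' M', carrier H' \proper carrier H -> hypergraph H' ->
  saturated H' -> M' \subset H' -> antichains_miss H' M' -> constructible H' M'.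

Lemma constructible_top M : carrier H \in H -> M \subset H ->
  antichains_miss H M -> constructible H M.
Proof.
move=> cH sMH acM.
have c0 : carrier H != set0 by apply: contraNneq h0 => <-.
have [x xc xM'] := uncovered_point cH c0 sMH acM.
set H' := restr H (carrier H :\ x).
have sM'H' : M :\ carrier H \subset H'.
  apply/subsetP=> Y YM'; have YH := subsetP sMH Y (subsetP (subsetDl _ _) Y YM').
  rewrite inE YH subsetD1 sub_carrier //=.
  by apply: contra xM' => xY; apply/bigcupP; exists Y.
have ltH' : carrier H' \proper carrier H.
  exact: sub_proper_trans (carrier_restr_sub _ _) (properD1 xc).
have acM' : antichains_miss H' (M :\ carrier H).
  exact: antichains_missS (restr_sub _ _) (subsetDl _ _) acM.
have [K [cK sK]] := IH ltH' (hypergraph_restr _ h0) (saturated_restr sat) sM'H' acM'.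
exists (carrier H |: K); split.
  apply: (@constr_conn _ H x K) => //; first by rewrite card_gt0.
  exact: carrier_in_connected.
apply/subsetP=> Y YM; rewrite in_setU1; have [//|neY] := eqVneq Y (carrier H).
by apply: (subsetP sK); rewrite in_setD1 neY YM.
Qed.

Lemma constructible_split M : H != set0 -> carrier H \notin H -> M \subset H ->
  antichains_miss H M -> constructible H M.
Proof.
move=> Hn0 cH sMH acM; set P := maxpart H.
have hp := hpartition_maxpart h0 sat.
have H2 := maxsets_card Hn0 cH.
have /fin_all_exists[Ks cKs] B :
    exists K, B \in P -> construction B K /\ M :&: B \subset K.
  have [BP|] := boolP (B \in P); last by exists set0.
  have [/(maxsets_proper h0 sat H2) ltB eB] := mem_maxpart BP.
  have hB : hypergraph B by rewrite eB; apply: hypergraph_restr.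
  have sB : saturated B by rewrite eB; apply: saturated_restr.
  have acB : antichains_miss B (M :&: B).
    by apply: antichains_missS acM; [rewrite eB; apply: restr_sub | apply: subsetIl].
  by have [K KB] := IH ltB hB sB (subsetIr _ _) acB; exists K.
have nconn : ~ connected H by move/(connected_carrier_in h0 sat Hn0); apply/negP.
exists (\bigcup_(B in P) Ks B); split.
  apply: (constr_split nconn hp) => [B /(maxpart_connected h0) // | | B /cKs[] //].
  by rewrite card_maxpart.
apply/subsetP=> Y YM; have : Y \in cover P by rewrite (hpartition_cover hp) (subsetP sMH).
case/bigcupP=> B BP YB; apply/bigcupP; exists B => //.
by apply: (subsetP (cKs B BP).2); rewrite inE YM.
Qed.

End Completeness.

Lemma antichains_miss_constructible H M : hypergraph H -> saturated H ->
  M \subset H -> antichains_miss H M -> constructible H M.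
Proof.
move: {2}#|carrier H|.+1 (ltnSn #|carrier H|) => n.
elim: n H M => [|n IHn] H M //; rewrite ltnS => Hn h0 sat sMH acM.
have [H0|Hn0] := eqVneq H set0.
  by exists set0; split; [rewrite H0; apply: constr_empty | rewrite -H0].
have IH H' M' : carrier H' \proper carrier H -> hypergraph H' -> saturated H' ->
    M' \subset H' -> antichains_miss H' M' -> constructible H' M'.
  by move=> /proper_card ltH'; apply: IHn; apply: leq_trans ltH' Hn.
have [cH|cH] := boolP (carrier H \in H).
  exact: constructible_top.
exact: constructible_split.
Qed.

End Hypergraphs.

Theorem proposition6p13 (T : finType) (H M : {set {set T}}) :
  ASC H -> H != set0 -> M \subset H ->
  (construct H M <->
   ((forall S, antichain M S -> misses H S) /\ carrier H \in M)).
Proof.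
case=> h0 _ sat _ _ sMH; split.
- case=> [[K [cK sMK]] cH]; split=> // S /(antichainS sMK).
  exact: construction_misses cK S.
- by case=> acM cH; split=> //; apply: antichains_miss_constructible.
Qed.
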